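(* Let $0<a<r$ and let $M_{r,a}$ be the open Möbius strip covered by two charts with coordinates $(\varphi,\tau)$, $\tau\in(-a,a)$, related on overlaps by $(\varphi,\tau)=(\bar\varphi,\bar\tau)$ for $\bar\varphi\in(0,\pi)$ and $(\varphi,\tau)=(\bar\varphi-2\pi,-\bar\tau)$ for $\bar\varphi\in(\pi,2\pi)$ (embedded in $\mathbb{R}^3$ as $((r+\tau\cos\frac\varphi2)\cos\varphi,(r+\tau\cos\frac\varphi2)\sin\varphi,\tau\sin\frac\varphi2)$). Put $g(\varphi,\tau)=(r+\tau\cos\frac\varphi2)^2+\frac{\tau^2}{4}$ and $k(\varphi,\tau)=4\cos\frac\varphi2\,(r+\tau\cos\frac\varphi2)+\tau$, and let $\varepsilon=(\varepsilon_\varphi\omega^\varphi+\varepsilon_\tau\omega^\tau)\wedge dt$ with $\varepsilon_\varphi=\tfrac12\dot\varphi^2\tau\sin\frac\varphi2(r+\tau\cos\frac\varphi2)-\tfrac12\dot\varphi\dot\tau\,k-g\ddot\varphi$, $\varepsilon_\tau=\tfrac14\dot\varphi^2k-\ddot\tau$. Then $\varepsilon$ is a globally defined, globally variational source form on $\mathbb{R}\times T^2M_{r,a}$, and $\lambda=\mathscr L\,dt$ with $$\mathscr L=-\tfrac12\dot\varphi^3\tau\sin\tfrac\varphi2\big(r+\tau\cos\tfrac\varphi2\big)t+\tfrac14\dot\varphi^2\dot\tau\,k\,t+g\dot\varphi\ddot\varphi\,t+\dot\tau\ddot\tau\,t+g\dot\varphi^2+\dot\tau^2$$ is a global Lagrange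 function on $\mathbb{R}\times T^2M_{r,a}$ with $E_\lambda=\varepsilon$.
   Context: For a $2$-manifold $M$ with local coordinates $(q^1,q^2)$, $\mathbb{R}\times T^2M$ has coordinates $(t,q^i,\dot q^i,\ddot q^i)$; contact forms $\omega^{i}=dq^i-\dot q^i dt$. A source form is $\varepsilon=\sum_i\varepsilon_i\omega^i\wedge dt$. For a (possibly second-order) Lagrange function $\mathscr L(t,q,\dot q,\ddot q)$, the Euler–Lagrange form is $E_\lambda=\sum_iE_i(\mathscr L)\omega^i\wedge dt$ with $E_i(\mathscr L)=\partial\mathscr L/\partial q^i-\frac{d}{dt}\partial\mathscr L/\partial\dot q^i+\frac{d^2}{dt^2}\partial\mathscr L/\partial\ddot q^i$, $d/dt$ the total derivative. Globally variational: there is a Lagrange function defined on all of the jet space whose Euler–Lagrange form is $\varepsilon$. *)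

From Stdlib Require Import Reals.
Open Scope R_scope.

(* A point of R x T^2 M in chart coordinates (t, phi, tau, phi', tau', phi'', tau''). *)
Record jet := mkJet {
  jt : R; jphi : R; jtau : R; jphid : R; jtaud : R; jphidd : R; jtaudd : R }.

Inductive coord := Cphi | Ctau | Cphid | Ctaud | Cphidd | Ctaudd.

Definition shift (c : coord) (h : R) (x : jet) : jet :=
  match c with
  | Cphi   => mkJet (jt x) (jphi x + h) (jtau x) (jphid x) (jtaud x) (jphidd x) (jtaudd x)
  | Ctau   => mkJet (jt x) (jphi x) (jtau x + h) (jphid x) (jtaud x) (jphidd x) (jtaudd x)
  | Cphid  => mkJet (jt x) (jphi x) (jtau x) (jphid x + h) (jtaud x) (jphidd x) (jtaudd x)
  | Ctaud  => mkJet (jt x) (jphi x) (jtau x) (jphid x) (jtaud x + h) (jphidd x) (jtaudd x)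
  | Cphidd => mkJet (jt x) (jphi x) (jtau x) (jphid x) (jtaud x) (jphidd x + h) (jtaudd x)
  | Ctaudd => mkJet (jt x) (jphi x) (jtau x) (jphid x) (jtaud x) (jphidd x) (jtaudd x + h)
  end.

Definition is_partial (D : R -> R -> Prop) (F : jet -> R) (c : coord) (G : jet -> R) : Prop :=
  forall x, D (jphi x) (jtau x) -> derivable_pt_lim (fun h => F (shift c h x)) 0 (G x).

Definition chart_bar (a : R) (phi tau : R) : Prop := 0 < phi < 2 * PI /\ - a < tau < a.
Definition chart_unbar (a : R) (phi tau : R) : Prop := - PI < phi < PI /\ - a < tau < a.

(* Transition on the part of the overlap with phibar in (pi, 2pi), prolonged to jets:
   (phi, tau) = (phibar - 2 pi, - taubar).  On phibar in (0,pi) it is the identity. *)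
Definition transition (x : jet) : jet :=
  mkJet (jt x) (jphi x - 2 * PI) (- jtau x) (jphid x) (- jtaud x) (jphidd x) (- jtaudd x).

Definition gfun (r phi tau : R) : R := (r + tau * cos (phi / 2)) ^ 2 + tau ^ 2 / 4.
Definition kfun (r phi tau : R) : R := 4 * cos (phi / 2) * (r + tau * cos (phi / 2)) + tau.

Definition eps_phi (r : R) (x : jet) : R :=
  let p := jphi x in let q := jtau x in
  / 2 * jphid x ^ 2 * q * sin (p / 2) * (r + q * cos (p / 2))
  - / 2 * jphid x * jtaud x * kfun r p q
  - gfun r p q * jphidd x.
Definition eps_tau (r : R) (x : jet) : R :=
  / 4 * jphid x ^ 2 * kfun r (jphi x) (jtau x) - jtaudd x.

Definition Lag (r : R) (x : jet) : R :=
  let t := jt x in let p := jphi x in let q := jtau x in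
  let pd := jphid x in let qd := jtaud x in
  let pdd := jphidd x in let qdd := jtaudd x in
  - / 2 * pd ^ 3 * q * sin (p / 2) * (r + q * cos (p / 2)) * t
  + / 4 * pd ^ 2 * qd * kfun r p q * t
  + gfun r p q * pd * pdd * t
  + qd * qdd * t
  + gfun r p q * pd ^ 2
  + qd ^ 2.

Definition curve4 (f f1 f2 f3 f4 : R -> R) : Prop :=
  forall s, derivable_pt_lim f s (f1 s) /\ derivable_pt_lim f1 s (f2 s) /\
            derivable_pt_lim f2 s (f3 s) /\ derivable_pt_lim f3 s (f4 s).

Definition EL_comp_eq (Lq Lqd Lqdd : jet -> R) (j : R -> jet) (e : jet -> R) : Prop :=
  exists U V V1 : R -> R,
    (forall s, derivable_pt_lim (fun u => Lqd (j u)) s (U s)) /\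
    (forall s, derivable_pt_lim (fun u => Lqdd (j u)) s (V s)) /\
    (forall s, derivable_pt_lim V s (V1 s)) /\
    (forall s, Lq (j s) - U s + V1 s = e (j s)).

(* E_lambda = eps on the chart with domain D (L, eps written in that chart's coordinates):
   the partial derivatives of L exist, and for every curve in the chart domain the
   Euler-Lagrange expressions along its prolongation equal the components of eps. *)
Definition EL_equals (D : R -> R -> Prop) (L ephi etau : jet -> R) : Prop :=
  exists Lp Lq Lpd Lqd Lpdd Lqdd : jet -> R,
    is_partial D L Cphi Lp /\ is_partial D L Ctau Lq /\
    is_partial D L Cphid Lpd /\ is_partial D L Ctaud Lqd /\
    is_partial D L Cphidd Lpdd /\ is_partial D L Ctaudd Lqdd /\
    forall p p1 p2 p3 p4 q q1 q2 q3 q4 : R -> R,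
      curve4 p p1 p2 p3 p4 -> curve4 q q1 q2 q3 q4 ->
      (forall s, D (p s) (q s)) ->
      let j := fun s => mkJet s (p s) (q s) (p1 s) (q1 s) (p2 s) (q2 s) in
      EL_comp_eq Lp Lpd Lpdd j ephi /\ EL_comp_eq Lq Lqd Lqdd j etau.

From Stdlib Require Import Reals FunctionalExtensionality.
From Coquelicot Require Import Coquelicot.
Open Scope R_scope.

(* Write T = (g phi'^2 + tau'^2) / 2 for the kinetic energy of the metric g dphi^2 + dtau^2
   induced by the embedding.  Then L = 2 T + t dT/dt = T + d/dt (t T), and a total
   derivative has vanishing Euler-Lagrange expressions, so E(L) = E(T): the components
   - g_phi phi'^2 / 2 - g_tau phi' tau' - g phi'' and g_tau phi'^2 / 2 - tau'' of the
   geodesic source form.  For the strip g_phi = - tau sin(phi/2) (r + tau cos(phi/2)) and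
   g_tau = k / 2, so this is eps.  The identity E(L) = E(T) only uses the chain rule for g
   and its first partial derivatives, so it holds for an arbitrary coefficient g.
   Under the chart transition, cos(phi/2), sin(phi/2) and tau all change sign, so g is
   invariant and k is odd; this gives the transformation laws of eps and L. *)

Definition is_gradient (f fx fy : R -> R -> R) : Prop :=
  forall (p q : R -> R) (s dp dq : R),
    derivable_pt_lim p s dp -> derivable_pt_lim q s dq ->
    derivable_pt_lim (fun u => f (p u) (q u)) s (fx (p s) (q s) * dp + fy (p s) (q s) * dq).

Definition along (f : R -> R -> R) (p q : R -> R) (u : R) : R := f (p u) (q u).

Lemma is_derive_along (f fx fy : R -> R -> R) (p q : R -> R) (s dp dq : R) :
  is_gradient f fx fy -> is_derive p s dp -> is_derive q s dq ->
  is_derive (along f p q) s (fx (p s) (q s) * dp + fy (p s) (q s) * dq).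
Proof.
  intros grad_f dp_s dq_s; apply is_derive_Reals.
  apply grad_f; apply is_derive_Reals; assumption.
Qed.

Lemma curve4_derivable (f f1 f2 f3 f4 : R -> R) : curve4 f f1 f2 f3 f4 ->
  (forall s, derivable_pt_lim f s (f1 s)) /\ (forall s, derivable_pt_lim f1 s (f2 s)) /\
  (forall s, derivable_pt_lim f2 s (f3 s)).
Proof. intros Hf; repeat split; intro s; apply Hf. Qed.

Ltac solve_is_derive :=
  first
  [ lazymatch goal with |- is_derive (fun _ => along _ _ _ _) _ _ => idtac end;
    eapply is_derive_along; [eassumption | solve_is_derive | solve_is_derive]
  | apply is_derive_Reals;
    first [ eassumption
          | match goal with H : forall s : R, derivable_pt_lim _ s _ |- _ => apply H end ]
  | auto_derive; [exact I | reflexivity] ].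

Ltac auto_derive_along :=
  auto_derive;
  [ repeat split; eexists; solve_is_derive
  | repeat match goal with
      |- context [Derive ?P ?s] => erewrite (is_derive_unique P s) by solve_is_derive
    end;
    (* auto_derive states the equation in [R_AbsRing], where [field] does not apply. *)
    lazymatch goal with |- @eq _ ?a ?b => change (@eq R a b) end ].

Ltac abstract_var u t := lazymatch eval pattern u in t with ?h _ => h end.

(* auto_derive only differentiates functions of one real variable, so every [f a b] with
   [f] a variable and [u] occurring in [a] or [b] is rewritten as [along f P Q u]. *)
Ltac fold_along u :=
  repeat match goal with
  | |- context [?f ?a ?b] =>
      is_var f;
      lazymatch constr:((a, b)) with context [u] => idtac end;
      let P := abstract_var u a in
      let Q := abstract_var u b in
      change (f a b) with (along f P Q u)
  end.

Ltac derive_along unfolds :=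
  apply is_derive_Reals;
  eapply is_derive_ext;
  [ let u := fresh "u" in intro u; cbv beta; unfolds; fold_along u; reflexivity
  | auto_derive_along ].

Section MetricLagrangian.

(* Sharing [gxy] between [gx_grad] and [gy_grad] builds in the symmetry of the mixed
   partial derivatives, which the Euler-Lagrange identity needs. *)
Variables g gx gy gxx gxy gyy : R -> R -> R.
Hypotheses (g_grad : is_gradient g gx gy) (gx_grad : is_gradient gx gxx gxy)
  (gy_grad : is_gradient gy gxy gyy).

(* The total time derivative of the kinetic energy (g phi'^2 + tau'^2) / 2. *)
Definition kinetic_rate (x : jet) : R :=
  let p := jphi x in let q := jtau x in
  / 2 * gx p q * jphid x ^ 3 + / 2 * gy p q * jphid x ^ 2 * jtaud x
  + g p q * jphid x * jphidd x + jtaud x * jtaudd x.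

Definition lagrangian (x : jet) : R :=
  jt x * kinetic_rate x + g (jphi x) (jtau x) * jphid x ^ 2 + jtaud x ^ 2.

Definition geodesic_phi (x : jet) : R :=
  let p := jphi x in let q := jtau x in
  - / 2 * gx p q * jphid x ^ 2 - gy p q * jphid x * jtaud x - g p q * jphidd x.

Definition geodesic_tau (x : jet) : R :=
  / 2 * gy (jphi x) (jtau x) * jphid x ^ 2 - jtaudd x.

Definition lagrangian_partial (c : coord) (x : jet) : R :=
  let t := jt x in let p := jphi x in let q := jtau x in
  let pd := jphid x in let qd := jtaud x in
  match c with
  | Cphi => t * (/ 2 * gxx p q * pd ^ 3 + / 2 * gxy p q * pd ^ 2 * qd + gx p q * pd * jphidd x)
            + gx p q * pd ^ 2
  | Ctau => t * (/ 2 * gxy p q * pd ^ 3 + / 2 * gyy p q * pd ^ 2 * qd + gy p q * pd * jphidd x)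
            + gy p q * pd ^ 2
  | Cphid => t * (3 / 2 * gx p q * pd ^ 2 + gy p q * pd * qd + g p q * jphidd x) + 2 * g p q * pd
  | Ctaud => t * (/ 2 * gy p q * pd ^ 2 + jtaudd x) + 2 * qd
  | Cphidd => t * g p q * pd
  | Ctaudd => t * qd
  end.

Lemma lagrangian_is_partial (D : R -> R -> Prop) (c : coord) :
  is_partial D lagrangian c (lagrangian_partial c).
Proof.
  intros x _; destruct c;
    derive_along ltac:(unfold lagrangian, kinetic_rate, shift;
                       cbn [jt jphi jtau jphid jtaud jphidd jtaudd]);
    unfold lagrangian_partial; cbv beta; rewrite ?Rplus_0_r; field.
Qed.

Section Prolongation.

Variables p p1 p2 p3 q q1 q2 q3 : R -> R.
Hypotheses (p_p1 : forall s, derivable_pt_lim p s (p1 s))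
  (p1_p2 : forall s, derivable_pt_lim p1 s (p2 s))
  (p2_p3 : forall s, derivable_pt_lim p2 s (p3 s))
  (q_q1 : forall s, derivable_pt_lim q s (q1 s))
  (q1_q2 : forall s, derivable_pt_lim q1 s (q2 s))
  (q2_q3 : forall s, derivable_pt_lim q2 s (q3 s)).

Let j (s : R) : jet := mkJet s (p s) (q s) (p1 s) (q1 s) (p2 s) (q2 s).

Ltac unfold_prolongation :=
  unfold lagrangian_partial, j; cbn [jt jphi jtau jphid jtaud jphidd jtaudd].

Lemma lagrangian_EL_phi :
  EL_comp_eq (lagrangian_partial Cphi) (lagrangian_partial Cphid)
    (lagrangian_partial Cphidd) j geodesic_phi.
Proof.
  do 3 eexists; split; [|split; [|split]]; intro s.
  - derive_along unfold_prolongation; reflexivity.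
  - derive_along unfold_prolongation; reflexivity.
  - derive_along idtac; reflexivity.
  - unfold along, geodesic_phi; unfold_prolongation; field.
Qed.

Lemma lagrangian_EL_tau :
  EL_comp_eq (lagrangian_partial Ctau) (lagrangian_partial Ctaud)
    (lagrangian_partial Ctaudd) j geodesic_tau.
Proof.
  do 3 eexists; split; [|split; [|split]]; intro s.
  - derive_along unfold_prolongation; reflexivity.
  - derive_along unfold_prolongation; reflexivity.
  - derive_along idtac; reflexivity.
  - unfold along, geodesic_tau; unfold_prolongation; field.
Qed.

End Prolongation.

Theorem lagrangian_EL (D : R -> R -> Prop) :
  EL_equals D lagrangian geodesic_phi geodesic_tau.
Proof.
  exists (lagrangian_partial Cphi), (lagrangian_partial Ctau), (lagrangian_partial Cphid),
    (lagrangian_partial Ctaud), (lagrangian_partial Cphidd), (lagrangian_partial Ctaudd).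
  do 6 (split; [apply lagrangian_is_partial |]).
  intros p p1 p2 p3 p4 q q1 q2 q3 q4 Hp Hq _ j.
  destruct (curve4_derivable _ _ _ _ _ Hp) as (p_p1 & p1_p2 & p2_p3).
  destruct (curve4_derivable _ _ _ _ _ Hq) as (q_q1 & q1_q2 & q2_q3).
  split; [eapply lagrangian_EL_phi | eapply lagrangian_EL_tau]; eassumption.
Qed.

End MetricLagrangian.

Definition gfun_dphi (r phi tau : R) : R := - tau * sin (phi / 2) * (r + tau * cos (phi / 2)).
Definition gfun_dtau (r phi tau : R) : R := 2 * cos (phi / 2) * (r + tau * cos (phi / 2)) + tau / 2.
Definition gfun_dphi2 (r phi tau : R) : R :=
  tau ^ 2 * sin (phi / 2) ^ 2 / 2 - tau * cos (phi / 2) * (r + tau * cos (phi / 2)) / 2.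
Definition gfun_dphi_dtau (r phi tau : R) : R :=
  - sin (phi / 2) * (r + tau * cos (phi / 2)) - tau * sin (phi / 2) * cos (phi / 2).
Definition gfun_dtau2 (r phi tau : R) : R := 2 * cos (phi / 2) ^ 2 + / 2.

(* [unfold Rdiv] because auto_derive turns [phi / 2] into [phi * / 2] inside sin and cos,
   whose arguments [field] compares syntactically. *)
Ltac gradient_by_auto_derive unfolds :=
  intros p q s dp dq Hp Hq; apply is_derive_Reals; unfolds; auto_derive_along;
  unfolds; unfold Rdiv; field.

Lemma gfun_gradient (r : R) : is_gradient (gfun r) (gfun_dphi r) (gfun_dtau r).
Proof. gradient_by_auto_derive ltac:(unfold gfun, gfun_dphi, gfun_dtau). Qed.

Lemma gfun_dphi_gradient (r : R) :
  is_gradient (gfun_dphi r) (gfun_dphi2 r) (gfun_dphi_dtau r).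
Proof. gradient_by_auto_derive ltac:(unfold gfun_dphi, gfun_dphi2, gfun_dphi_dtau). Qed.

Lemma gfun_dtau_gradient (r : R) :
  is_gradient (gfun_dtau r) (gfun_dphi_dtau r) (gfun_dtau2 r).
Proof. gradient_by_auto_derive ltac:(unfold gfun_dtau, gfun_dphi_dtau, gfun_dtau2). Qed.

Lemma Lag_lagrangian (r : R) : Lag r = lagrangian (gfun r) (gfun_dphi r) (gfun_dtau r).
Proof.
  apply functional_extensionality; intro x.
  unfold Lag, lagrangian, kinetic_rate, gfun_dphi, gfun_dtau, kfun; field.
Qed.

Lemma eps_phi_geodesic (r : R) : eps_phi r = geodesic_phi (gfun r) (gfun_dphi r) (gfun_dtau r).
Proof.
  apply functional_extensionality; intro x.
  unfold eps_phi, geodesic_phi, gfun_dphi, gfun_dtau, kfun; field.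
Qed.

Lemma eps_tau_geodesic (r : R) : eps_tau r = geodesic_tau (gfun_dtau r).
Proof.
  apply functional_extensionality; intro x.
  unfold eps_tau, geodesic_tau, gfun_dtau, kfun; field.
Qed.

Lemma Lag_EL (r : R) (D : R -> R -> Prop) : EL_equals D (Lag r) (eps_phi r) (eps_tau r).
Proof.
  rewrite Lag_lagrangian, eps_phi_geodesic, eps_tau_geodesic.
  eapply lagrangian_EL; [apply gfun_gradient | apply gfun_dphi_gradient | apply gfun_dtau_gradient].
Qed.

Lemma cos_half_sub_2PI (phi : R) : cos ((phi - 2 * PI) / 2) = - cos (phi / 2).
Proof.
  replace ((phi - 2 * PI) / 2) with (phi / 2 - PI) by field.
  rewrite cos_minus, cos_PI, sin_PI; ring.
Qed.

Lemma sin_half_sub_2PI (phi : R) : sin ((phi - 2 * PI) / 2) = - sin (phi / 2).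
Proof.
  replace ((phi - 2 * PI) / 2) with (phi / 2 - PI) by field.
  rewrite sin_minus, cos_PI, sin_PI; ring.
Qed.

Ltac unfold_transition :=
  unfold transition, gfun, kfun; cbn [jt jphi jtau jphid jtaud jphidd jtaudd];
  rewrite cos_half_sub_2PI, sin_half_sub_2PI.

Lemma eps_transition (r : R) (x : jet) :
  eps_phi r (transition x) = eps_phi r x /\ eps_tau r (transition x) = - eps_tau r x.
Proof. unfold eps_phi, eps_tau; unfold_transition; split; field. Qed.

Lemma Lag_transition (r : R) (x : jet) : Lag r (transition x) = Lag r x.
Proof. unfold Lag; unfold_transition; field. Qed.

(* The bounds on [a], [r] and on the coordinates are not needed: the transformation laws
   and the Euler-Lagrange identity hold on the whole jet space. *)
Theorem mainTheorem8 (r a : R) (ha : 0 < a) (har : a < r) :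
  (* eps is globally defined: its components transform as those of a source form
     under the chart transition (w^phi = w^phibar, w^tau = - w^taubar) *)
  (forall x : jet, PI < jphi x < 2 * PI -> - a < jtau x < a ->
     eps_phi r (transition x) = eps_phi r x /\
     eps_tau r (transition x) = - eps_tau r x) /\
  (* the Lagrange function is globally defined *)
  (forall x : jet, PI < jphi x < 2 * PI -> - a < jtau x < a ->
     Lag r (transition x) = Lag r x) /\
  (* E_lambda = eps in each chart (hence eps is globally variational) *)
  EL_equals (chart_bar a) (Lag r) (eps_phi r) (eps_tau r) /\
  EL_equals (chart_unbar a) (Lag r) (eps_phi r) (eps_tau r).
Proof.
  split; [| split; [| split]].
  - intros x _ _; apply eps_transition.
  - intros x _ _; apply Lag_transition.
  - apply Lag_EL.
  - apply Lag_EL.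
Qed.
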